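(* Let $\mathcal H$ be a complex Hilbert space of finite dimension $n$, and let $\mathbf A=(A_1,\dots,A_m)$ be an $m$-tuple of self-adjoint operators on $\mathcal H$ such that $\{A_1,\dots,A_m\}$ is linearly independent. Assume $\mathbf 0\in\Lambda_{n-1}(\mathbf A)$, i.e., there is an orthonormal basis of $\mathcal H$ in which every $A_j$ has matrix of the form $\begin{pmatrix} * & * \\ * & 0_{n-1}\end{pmatrix}$. (a) If $m=2n-1$, then there is an invertible $S\in M_m(\mathbb R)$ such that $$\Lambda_1(\mathbf A)=\Big\{(1+u_1,u_2,\dots,u_m)S:\ u_1,\dots,u_m\in\mathbb R,\ \sum_{j=1}^m u_j^2=1\Big\},$$ so that $\Lambda_1(\mathbf A)$ is not star-shaped. (b) If $m<2n-1$, then $\Lambda_1(\mathbf A)$ is star-shaped with $\mathbf 0$ as a star center.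
   Context: For an $m$-tuple $\mathbf A=(A_1,\dots,A_m)$ of self-adjoint operators on a complex Hilbert space $\mathcal H$ and a positive integer $k$, $\Lambda_k(\mathbf A)=\{(a_1,\dots,a_m)\in\mathbb R^m:$ there is an orthogonal projection $P$ of rank $k$ with $PA_jP=a_jP$ for all $j\}$; in particular $\Lambda_1(\mathbf A)=\{(\langle A_1x,x\rangle,\dots,\langle A_mx,x\rangle): x\in\mathcal H,\ \|x\|=1\}$ is the joint numerical range. A set $S\subseteq\mathbb R^m$ is star-shaped with star center $\mathbf c\in S$ if for every $\mathbf b\in S$ the segment joining $\mathbf c$ and $\mathbf b$ lies in $S$. Row vectors in $\mathbb R^m$ are multiplied on the right by $m\times m$ matrices. *)

(* The n-dimensional complex Hilbert space is C^n,
   realized as column vectors 'cV[R[i]]_n; operators are n x n complex matrices. *)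
From HB Require Import structures.
From mathcomp Require Import all_boot all_order all_algebra.
From mathcomp Require Import reals complex.
Set Implicit Arguments.
Unset Strict Implicit.
Unset Printing Implicit Defensive.
Import Order.TTheory GRing.Theory Num.Theory.
Local Open Scope ring_scope.

Definition adjmx (R : realType) (p q : nat) (A : 'M[R[i]]_(p, q)) : 'M[R[i]]_(q, p) :=
  map_mx (@conjc R) A^T.

Definition selfadj (R : realType) (n : nat) (A : 'M[R[i]]_n) : Prop :=
  adjmx A = A.

Definition lin_indep (R : realType) (n m : nat) (A : 'I_m -> 'M[R[i]]_n) : Prop :=
  forall c : 'I_m -> R,
    \sum_(j < m) (c j)%:C%C *: A j = 0 -> forall j, c j = 0.

Definition orth_proj (R : realType) (n k : nat) (P : 'M[R[i]]_n) : Prop :=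
  adjmx P = P /\ P *m P = P /\ \rank P = k.

Definition Lambda (R : realType) (n m k : nat) (A : 'I_m -> 'M[R[i]]_n)
    (a : 'rV[R]_m) : Prop :=
  exists P : 'M[R[i]]_n, orth_proj k P /\
    forall j : 'I_m, P *m A j *m P = (a 0 j)%:C%C *: P.

(* Lambda_1(A): the joint numerical range
   {(<A_1 x, x>, ..., <A_m x, x>) : ||x|| = 1}, with <y, x> = x^* y. *)
Definition jnr (R : realType) (n m : nat) (A : 'I_m -> 'M[R[i]]_n)
    (a : 'rV[R]_m) : Prop :=
  exists x : 'cV[R[i]]_n, (adjmx x *m x) 0 0 = 1 /\
    forall j : 'I_m, (adjmx x *m (A j *m x)) 0 0 = (a 0 j)%:C%C.

Definition star_center (R : realType) (m : nat) (S : 'rV[R]_m -> Prop)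
    (c : 'rV[R]_m) : Prop :=
  S c /\ forall b, S b -> forall t : R, 0 <= t <= 1 -> S ((1 - t) *: c + t *: b).

Definition star_shaped (R : realType) (m : nat) (S : 'rV[R]_m -> Prop) : Prop :=
  exists c, star_center S c.

(* Conjugating by a unitary that diagonalises the projection P, every A_j becomes
   bordered: zero outside the row and the column of one index i0.  For a bordered
   self-adjoint M, x^* M x is a real linear function of
     (|x_i0|^2, Re (x_i0^* x_k), Im (x_i0^* x_k))_(k <> i0),
   and as x ranges over the unit sphere of C^n this vector ranges over the sphere
   sum_i z_i^2 = z_0 of R^(2n-1), whose diameter is the segment [0, e_0].  So
   Lambda_1(A) is the image of that sphere under a real linear map L, which is
   injective because the A_j are linearly independent.  If m = 2n-1, L is
   invertible, and the image of a sphere is not star-shaped: the midpoint of a point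
   and its antipode lies inside.  If m < 2n-1, L kills some w <> 0; for z on the
   sphere and 0 <= s <= 1, the point s z lies in the closed ball, so the line
   s z + R w meets the sphere in a point with the same image s (z L). *)

From HB Require Import structures.
From mathcomp Require Import all_boot all_order all_algebra.
From mathcomp Require Import reals complex.
From mathcomp Require Import spectral sesquilinear.
From mathcomp Require Import ring lra zify.
Import Order.TTheory GRing.Theory Num.Theory.
Local Open Scope ring_scope.
Set Implicit Arguments.
Unset Strict Implicit.
Unset Printing Implicit Defensive.

Section SumSquares.
Variables (R : realFieldType) (k : nat).
Implicit Types z w : 'rV[R]_k.

Lemma sum_sqr_ge0 z : 0 <= \sum_i z 0 i ^+ 2.
Proof. by rewrite sumr_ge0 // => i _; rewrite sqr_ge0. Qed.

Lemma sum_sqr_eq0 z : \sum_i z 0 i ^+ 2 = 0 -> z = 0.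
Proof.
move=> /psumr_eq0P sum0; apply/rowP => i; rewrite mxE.
by apply/eqP; rewrite -sqrf_eq0 sum0 // => j _; rewrite sqr_ge0.
Qed.

Lemma sum_sqr_gt0 w : w != 0 -> 0 < \sum_i w 0 i ^+ 2.
Proof.
move=> w_neq0; rewrite lt_def sum_sqr_ge0 andbT.
by apply: contra w_neq0 => /eqP/sum_sqr_eq0->.
Qed.

Lemma sum_sqr_scale c z : \sum_i (c *: z) 0 i ^+ 2 = c ^+ 2 * \sum_i z 0 i ^+ 2.
Proof. by rewrite mulr_sumr; apply: eq_bigr => i _; rewrite mxE exprMn. Qed.

End SumSquares.

Lemma quadratic_root (R : rcfType) (a b c : R) :
  0 < a -> c <= 0 -> exists x, a * x ^+ 2 + b * x + c = 0.
Proof.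
move=> a_gt0 c_le0; set D := b ^+ 2 - 4 * a * c.
have D_ge0 : 0 <= D.
  have : 0 <= a * (- c) by apply: mulr_ge0; [exact: ltW | rewrite oppr_ge0].
  by have := sqr_ge0 b; rewrite /D; lra.
exists ((Num.sqrt D - b) / (2 * a)).
have a_neq0 : a != 0 by rewrite gt_eqF.
have -> : a * ((Num.sqrt D - b) / (2 * a)) ^+ 2 + b * ((Num.sqrt D - b) / (2 * a)) + c
    = (Num.sqrt D ^+ 2 - D) / (4 * a) by rewrite /D; field.
by rewrite sqr_sqrtr // subrr mul0r.
Qed.

Section DiameterSphere.
Variables (R : realType) (N : nat).
Implicit Types z w x u : 'rV[R]_N.+1.

Definition dsphere z : Prop := \sum_i z 0 i ^+ 2 = z 0 ord0.

Definition dsphere_map m (L : 'M[R]_(N.+1, m)) (a : 'rV[R]_m) : Prop :=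
  exists2 z, dsphere z & a = z *m L.

Lemma dsphere_param z :
  dsphere z <-> exists u, \sum_i u 0 i ^+ 2 = 1 /\
    z = 2^-1 *: \row_j (if (j : nat) == 0%N then 1 + u 0 j else u 0 j).
Proof.
rewrite /dsphere big_ord_recl; split.
  move=> z_sph; exists (2 *: z - \row_j ((j : nat) == 0%N)%:R); split.
    rewrite big_ord_recl !mxE /=.
    under eq_bigr => k _ do rewrite !mxE /= subr0 exprMn.
    by rewrite -mulr_sumr; lra.
  by apply/rowP => j; rewrite !mxE; case: eqP => _ /=; field.
move=> [u [u_unit ->]]; rewrite big_ord_recl in u_unit; rewrite !mxE /=.
under eq_bigr => k _ do rewrite !mxE /= exprMn.
rewrite -mulr_sumr; lra.
Qed.

Lemma dsphere_line x w : w != 0 -> \sum_i x 0 i ^+ 2 <= x 0 ord0 ->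
  exists lam, dsphere (x + lam *: w).
Proof.
move=> w_neq0 x_in.
have c_le0 : \sum_i x 0 i ^+ 2 - x 0 ord0 <= 0 by rewrite subr_le0.
have [lam lam_root] := quadratic_root (2 * \sum_i x 0 i * w 0 i - w 0 ord0)
  (sum_sqr_gt0 w_neq0) c_le0.
exists lam; rewrite /dsphere.
rewrite (eq_bigr (fun i => x 0 i ^+ 2 + 2 * lam * (x 0 i * w 0 i) + lam ^+ 2 * w 0 i ^+ 2));
  last by move=> i _; rewrite !mxE; ring.
rewrite !big_split /= -!mulr_sumr !mxE; apply/eqP.
by rewrite -subr_eq0 -[X in _ == X]lam_root; apply/eqP; ring.
Qed.

Lemma dsphere0 : dsphere 0.
Proof. by rewrite /dsphere big1 ?mxE // => i _; rewrite mxE expr0n. Qed.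

Lemma dsphere_map_star_center m (L : 'M[R]_(N.+1, m)) :
  (m < N.+1)%N -> star_center (dsphere_map L) 0.
Proof.
move=> m_lt; split; first by exists 0; rewrite ?mul0mx //; exact: dsphere0.
have [w w_neq0 wL] : exists2 w : 'rV_N.+1, w != 0 & w *m L = 0.
  have ker_neq0 : kermx L != 0.
    by rewrite -mxrank_eq0 mxrank_ker subn_eq0 -ltnNge (leq_ltn_trans (rank_leq_col L)).
  by exists (nz_row (kermx L)); rewrite ?nz_row_eq0 //; apply/sub_kermxP/nz_row_sub.
move=> _ [z z_sph ->] s /andP[s_ge0 s_le1]; rewrite scaler0 add0r.
have [lam lam_sph] : exists lam, dsphere (s *: z + lam *: w).
  apply: dsphere_line w_neq0 _; rewrite sum_sqr_scale z_sph mxE.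
  have z0_ge0 : 0 <= z 0 ord0 by rewrite -z_sph sum_sqr_ge0.
  have : 0 <= s * (1 - s) * z 0 ord0 by rewrite !mulr_ge0 // subr_ge0.
  lra.
by exists (s *: z + lam *: w); rewrite // mulmxDl -!scalemxAl wL scaler0 addr0.
Qed.

Lemma dsphere_map_not_star m (L : 'M[R]_(N.+1, m)) :
  row_free L -> ~ star_shaped (dsphere_map L).
Proof.
move=> L_free [_ [[z z_sph ->] star]].
pose e : 'rV[R]_N.+1 := \row_j ((j : nat) == 0%N)%:R.
have antipode_sph : dsphere (e - z).
  move: z_sph; rewrite /dsphere !big_ord_recl !mxE /=.
  under [in X in _ -> X]eq_bigr => k _ do rewrite !mxE /= sub0r sqrrN.
  lra.
have half_in01 : 0 <= (2^-1 : R) <= 1 by apply/andP; split; lra.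
have [z' z'_sph mid] := star _ (ex_intro2 _ _ _ antipode_sph erefl) _ half_in01.
have z'E : z' = 2^-1 *: e.
  apply: (row_free_inj L_free); rewrite -mid !scalemxAl -mulmxDl.
  by congr (_ *m _); apply/rowP => j; rewrite !mxE; field.
move: z'_sph; rewrite z'E /dsphere big_ord_recl big1 => [|k _].
  by rewrite !mxE /=; lra.
by rewrite !mxE /= mulr0 expr0n.
Qed.

Lemma dsphere_map_param m (L : 'M[R]_(N.+1, m)) a :
  dsphere_map L a <-> exists u, \sum_i u 0 i ^+ 2 = 1 /\
    a = \row_j (if (j : nat) == 0%N then 1 + u 0 j else u 0 j) *m (2^-1 *: L).
Proof.
split => [[z z_sph ->] | [u [u_unit ->]]].
  have [u [u_unit ->]] := (dsphere_param z).1 z_sph.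
  by exists u; split; rewrite // -scalemxAl scalemxAr.
exists (2^-1 *: \row_j (if (j : nat) == 0%N then 1 + u 0 j else u 0 j)).
  by apply/dsphere_param; exists u.
by rewrite -scalemxAl scalemxAr.
Qed.

End DiameterSphere.

Section StarShapedExt.
Variables (R : realType) (m : nat) (S T : 'rV[R]_m -> Prop).
Hypothesis ST : forall a, S a <-> T a.

Lemma star_center_ext c : star_center S c -> star_center T c.
Proof.
move=> [Sc starS]; split => [|b /ST Sb t t01]; first exact/ST.
exact/ST/starS.
Qed.

Lemma star_shaped_ext : star_shaped S -> star_shaped T.
Proof. by move=> [c Sc]; exists c; apply: star_center_ext. Qed.

End StarShapedExt.

Section ComplexSquares.
Local Open Scope complex_scope.
Variable R : realType.
Implicit Types a b c : R[i].
Local Notation Re := (@complex.Re R).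
Local Notation Im := (@complex.Im R).

Definition sqnormc a : R := Re a ^+ 2 + Im a ^+ 2.

Lemma mulJc a : a^* * a = (sqnormc a)%:C.
Proof. by case: a => a1 a2; rewrite /sqnormc /=; simpc; congr (_ +i* _); ring. Qed.

Lemma sqnormcJM a b : sqnormc (a^* * b) = sqnormc a * sqnormc b.
Proof. by case: a b => [a1 a2] [b1 b2]; rewrite /sqnormc /=; ring. Qed.

Lemma mulJc_real a b : b^* = b -> a^* * b * a = (sqnormc a * Re b)%:C.
Proof.
case: a b => [a1 a2] [b1 b2] [b2E]; have -> : b2 = 0 by lra.
by rewrite /sqnormc /=; simpc; congr (_ +i* _); ring.
Qed.

Lemma addJc_cross a b c : a^* * b * c + c^* * b^* * a =
   (2 * (Re b * Re (a^* * c) - Im b * Im (a^* * c)))%:C.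
Proof. by case: a b c => [a1 a2] [b1 b2] [c1 c2] /=; simpc; congr (_ +i* _); ring. Qed.

Lemma ReD a b : Re (a + b) = Re a + Re b. Proof. by case: a b => [? ?] [? ?]. Qed.
Lemma ImD a b : Im (a + b) = Im a + Im b. Proof. by case: a b => [? ?] [? ?]. Qed.
Lemma ReZ (r : R) a : Re (r%:C * a) = r * Re a.
Proof. by case: a => a1 a2 /=; rewrite mul0r subr0. Qed.
Lemma ImZ (r : R) a : Im (r%:C * a) = r * Im a.
Proof. by case: a => a1 a2 /=; rewrite mul0r addr0. Qed.

End ComplexSquares.

Section Bordered.
Local Open Scope complex_scope.
Variables (R : realType) (p : nat) (i0 : 'I_p.+1).
Local Notation Re := (@complex.Re R).
Local Notation Im := (@complex.Im R).
Implicit Types (M : 'M[R[i]]_p.+1) (y : 'cV[R[i]]_p.+1) (t : R) (u v : 'rV[R]_p).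

Definition bordered M : Prop := forall i k, i != i0 -> k != i0 -> M i k = 0.

Definition zrow t u v : 'rV[R]_(1 + (p + p)) := row_mx (\row_(k < 1) t) (row_mx u v).

Lemma zrow_first t u v : zrow t u v 0 ord0 = t.
Proof.
by rewrite (_ : ord0 = lshift (p + p) (ord0 : 'I_1)) ?row_mxEl ?mxE //; apply: val_inj.
Qed.

Lemma zrowP (z : 'rV[R]_(1 + (p + p))) : exists t u v, z = zrow t u v.
Proof.
exists (z 0 ord0), (lsubmx (rsubmx z)), (rsubmx (rsubmx z)).
rewrite /zrow hsubmxK -[LHS]hsubmxK; congr row_mx; apply/rowP => k.
by rewrite !mxE ord1; congr (z 0 _); apply: val_inj.
Qed.

Lemma zrow0 : zrow 0 0 0 = 0.
Proof.
by rewrite /zrow row_mx0 (_ : \row__ 0 = 0) ?row_mx0 //; apply/rowP => k; rewrite !mxE.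
Qed.

Lemma zrow_sum_sqr t u v :
  \sum_i zrow t u v 0 i ^+ 2 = t ^+ 2 + \sum_k (u 0 k ^+ 2 + v 0 k ^+ 2).
Proof.
rewrite big_split_ord big_ord1 /zrow row_mxEl mxE big_split_ord big_split /=.
by congr (_ + (_ + _)); apply: eq_bigr => k _; rewrite row_mxEr ?row_mxEl ?row_mxEr.
Qed.

Lemma zrow_dot t u v t' u' v' : (zrow t u v *m (zrow t' u' v')^T) 0 0 =
  t * t' + \sum_k (u 0 k * u' 0 k + v 0 k * v' 0 k).
Proof.
rewrite /zrow tr_row_mx mul_row_col tr_row_mx mul_row_col !mxE big_ord1 big_split /=.
by rewrite !mxE; congr (_ + (_ + _)); apply: eq_bigr => k _; rewrite !mxE.
Qed.

Definition border_coords M : 'rV[R]_(1 + (p + p)) :=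
  zrow (Re (M i0 i0)) (\row_k (2 * Re (M i0 (lift i0 k))))
       (\row_k (- (2 * Im (M i0 (lift i0 k))))).

Definition gram_coords y : 'rV[R]_(1 + (p + p)) :=
  zrow (sqnormc (y i0 0)) (\row_k Re ((y i0 0)^* * y (lift i0 k) 0))
       (\row_k Im ((y i0 0)^* * y (lift i0 k) 0)).

Lemma selfadj_conjE M i k : selfadj M -> M k i = (M i k)^*.
Proof. by move=> M_sa; rewrite -{1}M_sa !mxE. Qed.

Lemma adj_mul_self_sqnormc y :
  (adjmx y *m y) 0 0 = (sqnormc (y i0 0) + \sum_k sqnormc (y (lift i0 k) 0))%:C.
Proof.
rewrite !mxE (bigD1_ord i0) //= rmorphD rmorph_sum /= !mxE mulJc.
by congr (_ + _); apply: eq_bigr => k _; rewrite !mxE mulJc.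
Qed.

Lemma qform_bordered M y : selfadj M -> bordered M ->
  (adjmx y *m (M *m y)) 0 0 = ((gram_coords y *m (border_coords M)^T) 0 0)%:C.
Proof.
move=> M_sa M_bd; have lift_neq k : lift i0 k != i0 by rewrite eq_sym neq_lift.
have row_lift k : adjmx y 0 (lift i0 k) * (M *m y) (lift i0 k) 0 =
    (y (lift i0 k) 0)^* * (M i0 (lift i0 k))^* * y i0 0.
  rewrite !mxE (bigD1_ord i0) //= big1 ?addr0 => [|l _]; last by rewrite M_bd ?mul0r.
  by rewrite (selfadj_conjE _ _ M_sa) mulrA.
rewrite zrow_dot rmorphD rmorph_sum /= !mxE (bigD1_ord i0) //= !mxE (bigD1_ord i0) //=.
rewrite (eq_bigr _ (fun k _ => row_lift k)) mulrDr mulrA mulJc_real -?selfadj_conjE //.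
rewrite -addrA mulr_sumr -big_split /=; congr (_ + _); apply: eq_bigr => k _.
by rewrite mulrA addJc_cross !mxE; congr (_%:C); ring.
Qed.

Lemma gram_coords_sum_sqr y : \sum_i gram_coords y 0 i ^+ 2 =
  sqnormc (y i0 0) * (sqnormc (y i0 0) + \sum_k sqnormc (y (lift i0 k) 0)).
Proof.
rewrite zrow_sum_sqr mulrDr expr2; congr (_ + _); rewrite mulr_sumr.
by apply: eq_bigr => k _; rewrite !mxE -sqnormcJM.
Qed.

Lemma gram_coords_onto (z : 'rV[R]_(1 + (p + p))) : (0 < p)%N -> dsphere z ->
  exists2 y, (adjmx y *m y) 0 0 = 1 & gram_coords y = z.
Proof.
move=> p_gt0 z_sph; have lift_neq k : lift i0 k != i0 by rewrite eq_sym neq_lift.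
have z0_ge0 : 0 <= z 0 ord0 by rewrite -z_sph sum_sqr_ge0.
have [z0_eq0 | z0_neq0] := eqVneq (z 0 ord0) 0.
  have -> : z = 0 by apply: sum_sqr_eq0; rewrite z_sph.
  pose k0 := Ordinal p_gt0.
  exists (delta_mx (lift i0 k0) 0).
    rewrite adj_mul_self_sqnormc (bigD1 k0) //= big1 => [|k k_neq]; rewrite !mxE ?eqxx.
    - by rewrite (negbTE (neq_lift _ _)) /sqnormc /=; congr (_%:C); ring.
    - by rewrite (inj_eq lift_inj) (negbTE k_neq) /sqnormc /=; ring.
  rewrite -zrow0 /gram_coords !mxE (negbTE (neq_lift _ _)) /sqnormc /=.
  by congr zrow; [ring | apply/rowP => k; rewrite !mxE rmorph0 mul0r ..].
have [t [u [v z_eq]]] := zrowP z; subst z; rewrite zrow_first in z0_ge0 z0_neq0.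
move: z_sph; rewrite /dsphere zrow_sum_sqr zrow_first => z_sph.
have t_gt0 : 0 < t by rewrite lt_def z0_neq0.
pose s := Num.sqrt t; have s_gt0 : 0 < s by rewrite sqrtr_gt0.
have s_sqr : s ^+ 2 = t by rewrite sqr_sqrtr.
have s_neq0 : s != 0 by rewrite gt_eqF.
pose y : 'cV[R[i]]_p.+1 := \col_i
  (if unlift i0 i is Some k then (u 0 k +i* v 0 k) * (s^-1)%:C else s%:C).
have y0 : y i0 0 = s%:C by rewrite mxE unlift_none.
have y_lift k : y (lift i0 k) 0 = (u 0 k +i* v 0 k) * (s^-1)%:C by rewrite mxE liftK.
clearbody y.
exists y.
  rewrite adj_mul_self_sqnormc y0; under eq_bigr => k _ do rewrite y_lift.
  rewrite /sqnormc /= expr0n /= addr0 s_sqr; congr _%:C.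
  rewrite (eq_bigr (fun k => (u 0 k ^+ 2 + v 0 k ^+ 2) / t)) => [|k _]; last first.
    by rewrite /= -s_sqr; field.
  rewrite -mulr_suml; have -> : \sum_k (u 0 k ^+ 2 + v 0 k ^+ 2) = t - t ^+ 2 by lra.
  by field; rewrite gt_eqF.
rewrite /gram_coords y0 /sqnormc /= expr0n /= addr0 s_sqr.
by congr zrow; apply/rowP => k; rewrite !mxE y_lift /=; field.
Qed.

Lemma zrow_eq0 t u v : zrow t u v = 0 -> [/\ t = 0, u = 0 & v = 0].
Proof.
by rewrite -zrow0 => /eq_row_mx[/rowP/(_ ord0) + /eq_row_mx[-> ->]]; rewrite !mxE.
Qed.

Lemma border_coordsD M N : border_coords (M + N) = border_coords M + border_coords N.
Proof.
rewrite /border_coords /zrow !add_row_mx; congr row_mx; last congr row_mx;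
  by apply/rowP => k; rewrite !mxE ?ReD ?ImD //; ring.
Qed.

Lemma border_coordsZ (r : R) M : border_coords (r%:C *: M) = r *: border_coords M.
Proof.
rewrite /border_coords /zrow !scale_row_mx; congr row_mx; last congr row_mx;
  by apply/rowP => k; rewrite !mxE ?ReZ ?ImZ //; ring.
Qed.

Lemma border_coords_eq0 M : selfadj M -> bordered M -> border_coords M = 0 -> M = 0.
Proof.
move=> M_sa M_bd /zrow_eq0[Re00 /rowP Re0k /rowP Im0k].
have M0k k : M i0 (lift i0 k) = 0.
  move: (Re0k k) (Im0k k); rewrite !mxE; case: (M i0 (lift i0 k)) => a b /= ha hb.
  by apply/eqP; rewrite eq_complex /=; apply/andP; split; apply/eqP; lra.
have M00 : M i0 i0 = 0.
  move: Re00 (selfadj_conjE i0 i0 M_sa); case: (M i0 i0) => a b /= -> [hb].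
  by apply/eqP; rewrite eq_complex /= eqxx; apply/eqP; lra.
apply/matrixP => i k; rewrite mxE.
case: (unliftP i0 i) => [i'|] ->; case: (unliftP i0 k) => [k'|] ->.
- by rewrite M_bd // eq_sym neq_lift.
- by rewrite (selfadj_conjE _ _ M_sa) M0k rmorph0.
- exact: M0k.
- exact: M00.
Qed.

End Bordered.

Section BorderedFamily.
Local Open Scope complex_scope.
Variables (R : realType) (p m : nat) (i0 : 'I_p.+1) (B : 'I_m -> 'M[R[i]]_p.+1).
Hypothesis B_sa : forall j, selfadj (B j).
Hypothesis B_bd : forall j, bordered i0 (B j).

Definition border_mx : 'M[R]_(1 + (p + p), m) :=
  (\matrix_(j < m) border_coords i0 (B j))^T.

Lemma border_mxE (z : 'rV[R]_(1 + (p + p))) j :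
  (z *m border_mx) 0 j = (z *m (border_coords i0 (B j))^T) 0 0.
Proof. by rewrite !mxE; apply: eq_bigr => r _; rewrite !mxE. Qed.

Lemma jnr_bordered a : (0 < p)%N -> jnr B a <-> dsphere_map border_mx a.
Proof.
move=> p_gt0; split => [[y [y_unit yBy]] | [z z_sph ->]].
  exists (gram_coords i0 y).
    move: y_unit; rewrite /dsphere gram_coords_sum_sqr zrow_first (adj_mul_self_sqnormc i0).
    by move=> /complexI ->; rewrite mulr1.
  apply/rowP => j; apply: complexI.
  by rewrite -yBy border_mxE (qform_bordered y (B_sa j) (B_bd j)).
have [y y_unit <-] := gram_coords_onto i0 p_gt0 z_sph.
by exists y; split => // j; rewrite border_mxE (qform_bordered y (B_sa j) (B_bd j)).
Qed.

Lemma selfadj_comb (c : 'I_m -> R) : selfadj (\sum_j (c j)%:C *: B j).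
Proof.
apply/matrixP => i k; rewrite !mxE !summxE rmorph_sum; apply: eq_bigr => j _.
rewrite !mxE rmorphM /= (selfadj_conjE _ _ (B_sa j)) conjcK; congr (_ * _).
by apply/eqP; rewrite eq_complex /= oppr0 !eqxx.
Qed.

Lemma bordered_comb (c : 'I_m -> R) : bordered i0 (\sum_j (c j)%:C *: B j).
Proof.
by move=> i k ni nk; rewrite summxE big1 // => j _; rewrite mxE B_bd ?mulr0.
Qed.

Lemma border_mx_tr_free : lin_indep B -> row_free border_mx^T.
Proof.
move=> B_indep; apply/inj_row_free => c; rewrite trmxK mulmx_sum_row.
under eq_bigr => j _ do rewrite rowK -border_coordsZ.
have bc0 : border_coords i0 (0 : 'M[R[i]]_p.+1) = 0.
  by apply: (addrI (border_coords i0 (0 : 'M[R[i]]_p.+1))); rewrite -border_coordsD !addr0.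
rewrite -(big_morph _ (border_coordsD i0) bc0) => /border_coords_eq0 comb0.
apply/rowP => j; rewrite mxE; apply: B_indep j.
by apply: comb0; [exact: selfadj_comb | exact: bordered_comb].
Qed.

End BorderedFamily.

Section DiagonalRank.
Variables (F : fieldType) (n : nat).

Lemma mxrank_sum_le I (r : seq I) (P : pred I) p q (A : I -> 'M[F]_(p, q)) :
  (\rank (\sum_(i <- r | P i) A i)%R <= \sum_(i <- r | P i) \rank (A i))%N.
Proof.
elim/big_ind2: _ => [|B b C c rB rC|i _] //; first by rewrite mxrank0.
exact: leq_trans (mxrank_add B C) (leq_add rB rC).
Qed.

Lemma mxrank_diag_le (d : 'rV[F]_n) :
  (\rank (diag_mx d) <= #|[pred i | d ord0 i != 0%R]|)%N.
Proof.
rewrite diag_mx_sum_delta (bigID [pred i | d ord0 i != 0]) /= [X in (_ + X)%R]big1;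
  last by move=> i /negPn/eqP ->; rewrite scale0r.
rewrite addr0; apply: leq_trans (mxrank_sum_le _ _ _) _.
rewrite -sum1_card leq_sum // => i _.
by rewrite (leq_trans (mxrank_scale _ _)) ?mxrank_delta.
Qed.

End DiagonalRank.

Section UnitaryConjugation.
Local Open Scope sesquilinear_scope.
Import Num.Def.
Variables (R : realType) (n : nat).
Implicit Types (U V P M : 'M[R[i]]_n).

Lemma adjmxE p q (X : 'M[R[i]]_(p, q)) : adjmx X = X ^t conjC.
Proof. by []. Qed.

Lemma adjmxM p q r (X : 'M[R[i]]_(p, q)) (Y : 'M[R[i]]_(q, r)) :
  adjmx (X *m Y) = adjmx Y *m adjmx X.
Proof. by rewrite /adjmx trmx_mul map_mxM. Qed.

Lemma adjmxK p q (X : 'M[R[i]]_(p, q)) : adjmx (adjmx X) = X.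
Proof. exact: trmxCK. Qed.

Lemma unitarymx_mulmx_adj U : U \is unitarymx -> U *m adjmx U = 1%:M.
Proof. exact: unitarymxP. Qed.

Lemma unitarymx_adj_mulmx U : U \is unitarymx -> adjmx U *m U = 1%:M.
Proof.
by move=> U_unitary; rewrite -[X in _ *m X]adjmxK unitarymx_mulmx_adj // trmxC_unitary.
Qed.

Lemma selfadj_conj U M : selfadj M -> selfadj (U *m M *m adjmx U).
Proof. by move=> M_sa; rewrite /selfadj !adjmxM M_sa adjmxK mulmxA. Qed.

Variable m : nat.
Implicit Types A : 'I_m -> 'M[R[i]]_n.

Lemma jnr_conj_isometry U A B a : adjmx U *m U = 1%:M ->
  (forall j, B j = U *m A j *m adjmx U) -> jnr A a -> jnr B a.
Proof.
move=> UtU BE [x [x_unit xAx]]; exists (U *m x); split => [|j].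
  by rewrite adjmxM -mulmxA (mulmxA (adjmx U)) UtU mul1mx.
rewrite -xAx BE adjmxM -!mulmxA (mulmxA (adjmx U)) UtU mul1mx.
by rewrite (mulmxA (adjmx U)) UtU mul1mx.
Qed.

Lemma jnr_unitary_conj U A a : U \is unitarymx ->
  jnr (fun j => U *m A j *m adjmx U) a <-> jnr A a.
Proof.
move=> U_unitary; have UtU := unitarymx_adj_mulmx U_unitary; split.
  apply: (jnr_conj_isometry (U := adjmx U)) => [|j].
    by rewrite adjmxK unitarymx_mulmx_adj.
  by rewrite adjmxK !mulmxA UtU mul1mx -mulmxA UtU mulmx1.
exact: jnr_conj_isometry UtU _.
Qed.

Lemma lin_indep_unitary_conj U A : U \is unitarymx ->
  lin_indep A -> lin_indep (fun j => U *m A j *m adjmx U).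
Proof.
move=> U_unitary A_indep c comb0; apply: A_indep.
have UtU := unitarymx_adj_mulmx U_unitary.
have := congr1 (fun X => adjmx U *m X *m U) comb0; rewrite /= mulmx0 mul0mx.
rewrite mulmx_sumr mulmx_suml => conj_comb0; rewrite -[RHS]conj_comb0.
apply: eq_bigr => j _.
by rewrite -scalemxAr -scalemxAl -!mulmxA UtU mulmx1 !mulmxA UtU mul1mx.
Qed.

End UnitaryConjugation.

Section CorankOneProjection.
Variables (R : realType) (n : nat).

Lemma orth_proj_corank1 (P : 'M[R[i]]_n.+1) : orth_proj n P ->
  exists2 V : 'M[R[i]]_n.+1, V \is unitarymx &
    exists i0, P = adjmx V *m diag_mx (\row_i (i != i0)%:R) *m V.
Proof.
move=> [P_sa [P_idem P_rank]].
have /orthomx_spectralP : P \is normalmx by apply/normalmxP; rewrite -adjmxE P_sa.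
set V := spectralmx P; set d := spectral_diag P.
have V_unitary : V \is unitarymx := spectral_unitarymx P.
rewrite invmx_unitary // -adjmxE => P_eq.
have VVt := unitarymx_mulmx_adj V_unitary; have VtV := unitarymx_adj_mulmx V_unitary.
have D_eq : diag_mx d = V *m P *m adjmx V.
  by rewrite P_eq !mulmxA VVt mul1mx -!mulmxA VVt mulmx1.
have d01 i : d 0 i = 0 \/ d 0 i = 1.
  have : diag_mx d *m diag_mx d = diag_mx d.
    by rewrite D_eq -!mulmxA (mulmxA (adjmx V)) VtV mul1mx (mulmxA P) P_idem.
  move/matrixP/(_ i i); rewrite mulmx_diag !mxE eqxx mulr1n => dd.
  have /eqP : d 0 i * (d 0 i - 1) = 0 by rewrite mulrBr mulr1 dd subrr.
  by rewrite mulf_eq0 subr_eq0 => /orP[] /eqP; [left|right].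
have D_rank : \rank (diag_mx d) = n.
  have V_unit : V \in unitmx := unitarymx_unit V_unitary.
  rewrite D_eq mxrankMfree ?row_free_unit ?map_unitmx ?unitmx_tr //.
  by rewrite eqmxMfull ?row_full_unit.
have [i0 d_i0] : exists i0, d 0 i0 = 0.
  case: (pickP [pred i | d 0 i == 0]) => [i0 /eqP d_i0 | no_zero]; first by exists i0.
  have d1 : d = const_mx 1.
    apply/rowP => i; rewrite mxE; case: (d01 i) => // d_i.
    by move: (no_zero i); rewrite /= d_i eqxx.
  by move: D_rank; rewrite d1 diag_const_mx mxrank1; lia.
have d_other i : i != i0 -> d 0 i = 1.
  move=> i_neq; case: (d01 i) => // d_i; exfalso.
  have card_le : (#|[pred j | d ord0 j != 0%R]| <= #|~: [set i0; i]|)%N.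
    apply/subset_leq_card/subsetP => j; rewrite !inE.
    by apply: contraTN => /orP[] /eqP ->; rewrite ?d_i0 ?d_i eqxx.
  have := leq_trans (mxrank_diag_le d) card_le.
  have := max_card [set i0; i].
  rewrite D_rank (cardsCs (~: _)) setCK cards2 eq_sym i_neq card_ord /=; lia.
exists V => //; exists i0; rewrite P_eq; congr (_ *m diag_mx _ *m _).
by apply/rowP => i; rewrite !mxE; case: (eqVneq i i0) => [->|/d_other] //.
Qed.

Lemma bordered_unitary_conj (V P M : 'M[R[i]]_n.+1) i0 : V \is unitarymx ->
  P = adjmx V *m diag_mx (\row_i (i != i0)%:R) *m V -> P *m M *m P = 0 ->
  bordered i0 (V *m M *m adjmx V).
Proof.
move=> V_unitary P_eq PMP i k i_neq k_neq.
have VVt := unitarymx_mulmx_adj V_unitary; have VtV := unitarymx_adj_mulmx V_unitary.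
set E := diag_mx _ in P_eq.
have E_eq : E = V *m P *m adjmx V.
  by rewrite P_eq !mulmxA VVt mul1mx -!mulmxA VVt mulmx1.
have : E *m (V *m M *m adjmx V) *m E = 0.
  rewrite E_eq -!mulmxA (mulmxA (adjmx V) V) VtV mul1mx (mulmxA (adjmx V) V) VtV mul1mx.
  by rewrite !mulmxA -(mulmxA V) -(mulmxA V) PMP mulmx0 mul0mx.
move/matrixP/(_ i k); rewrite mul_mx_diag mul_diag_mx !mxE i_neq k_neq.
by rewrite mul1r mulr1.
Qed.

End CorankOneProjection.

Theorem proposition3p5 (R : realType) (n m : nat) (A : 'I_m -> 'M[R[i]]_n) :
  (2 <= n)%N ->
  (forall j, selfadj (A j)) ->
  lin_indep A ->
  Lambda (n.-1) A 0 ->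
  ((m = (2 * n).-1)%N ->
     (exists S : 'M[R]_m, S \in unitmx /\
        forall a : 'rV[R]_m,
          jnr A a <->
          exists u : 'rV[R]_m, \sum_(j < m) u 0 j ^+ 2 = 1 /\
            a = (\row_(j < m) (if (j : nat) == 0%N then 1 + u 0 j else u 0 j)) *m S)
     /\ ~ star_shaped (jnr A))
  /\
  ((m < (2 * n).-1)%N -> star_center (jnr A) 0).
Proof.
move: A; case: n => [//|p] A p_gt0 A_sa A_indep [P [P_proj PAP]].
have [V V_unitary [i0 P_eq]] := orth_proj_corank1 P_proj.
pose B j := V *m A j *m adjmx V.
have B_sa j : selfadj (B j) := selfadj_conj V (A_sa j).
have B_bd j : bordered i0 (B j).
  by apply: bordered_unitary_conj V_unitary P_eq _; rewrite PAP mxE scale0r.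
have B_indep : lin_indep B := lin_indep_unitary_conj V_unitary A_indep.
pose L := border_mx i0 B.
have jnrE a : jnr A a <-> dsphere_map L a.
  apply: iff_trans (iff_sym (jnr_unitary_conj A a V_unitary)) _.
  exact: jnr_bordered.
split => [m_eq | m_lt]; last first.
  apply: star_center_ext (dsphere_map_star_center L _) => [a|]; first by split => /jnrE.
  by move: m_lt; rewrite mulSn; lia.
have {m_eq} m_eq : m = (1 + (p + p))%N by rewrite m_eq mulSn; lia.
subst m; have L_free : row_free L.
  by rewrite row_free_unit -unitmx_tr -row_free_unit; exact: border_mx_tr_free.
split; last by move=> /(star_shaped_ext jnrE); exact: dsphere_map_not_star.
exists (2^-1 *: L); split => [|a]; last exact: iff_trans (jnrE a) (dsphere_map_param L a).
by rewrite unitmxZ -?row_free_unit // unitfE invr_eq0 pnatr_eq0.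
Qed.
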